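(* Let $D$ be a finite domain in $\mathbb{Z}^2$ and let $\mathcal{S}$ be a finite collection of paths in $D$ such that each path starts and ends on $\partial D$ and no two paths of $\mathcal{S}$ have an essential crossing. Then there is a path of total length at most $1.5\,|\partial D|+\sum_{P\in\mathcal{S}}|P|$ whose image is obtained from the union of the images of the paths in $\mathcal{S}$ by adding connecting segments along the perimeter of $D$.
   Context: Paths are paths in the standard Cayley graph of $\mathbb{Z}^2$ with generators $e_1,e_2$; $|P|$ is the length of $P$; $\partial D$ is the boundary of $D$, viewed as a closed curve. For a path $P_i$ write $A_i$ for its start and $B_i$ for its end. Two paths $P_1,P_2$ with endpoints on $\partial D$ have an essential crossing if $A_2$ and $B_2$ lie in the two different open arcs of $\partial D$ between $A_1$ and $B_1$. *)

From mathcomp Require Import all_boot all_order all_algebra.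
Set Implicit Arguments. Unset Strict Implicit. Unset Printing Implicit Defensive.
Import Order.TTheory GRing.Theory Num.Theory.

Local Open Scope ring_scope.
Definition pt := (int * int)%type.

Definition adj (p q : pt) : bool :=
  (absz (p.1 - q.1) + absz (p.2 - q.2) == 1)%N.

Definition is_path (P : seq pt) : bool :=
  if P is x :: s then path adj x s else false.

Definition len (P : seq pt) : nat := (size P).-1.

Definition startp (P : seq pt) : pt := head (0, 0) P.
Definition endp (P : seq pt) : pt := last (0, 0) P.

Definition steps (P : seq pt) : seq (pt * pt) := zip P (behead P).

Definition path_edge (P : seq pt) (u v : pt) : bool :=
  ((u, v) \in steps P) || ((v, u) \in steps P).

(* A boundary curve: a simple closed lattice curve given as the cyclic
   sequence c of its (distinct) vertices; its edges are (c_i, c_{i+1 mod n}). *)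
Definition simple_closed_curve (c : seq pt) : bool :=
  [&& (2 < size c)%N, uniq c & cycle adj c].

Definition curve_edges (c : seq pt) : seq (pt * pt) := zip c (rot 1 c).

Definition curve_edge (c : seq pt) (u v : pt) : bool :=
  ((u, v) \in curve_edges c) || ((v, u) \in curve_edges c).

(* |boundary| = number of edges of the closed curve. *)
Definition curve_len (c : seq pt) : nat := size c.

(* Interior of the curve (Jordan, parity of crossings): a lattice point p not
   on c is inside iff the horizontal ray {(p.1 + t, p.2 + 1/2) | t >= 0}
   crosses an odd number of edges of c; the crossed edges are exactly the
   vertical edges {(a, p.2), (a, p.2 + 1)} of c with a > p.1. *)
Definition crosses_ray (p : pt) (e : pt * pt) : bool :=
  let: (u, v) := e in
  [&& u.1 == v.1, p.1 < u.1 &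
      ((u.2 == p.2) && (v.2 == p.2 + 1)) || ((v.2 == p.2) && (u.2 == p.2 + 1))].

Definition inside (c : seq pt) (p : pt) : bool :=
  (p \notin c) && odd (count (crosses_ray p) (curve_edges c)).

Definition domain (c : seq pt) (p : pt) : bool := (p \in c) || inside c p.

Definition path_in (c : seq pt) (P : seq pt) : bool :=
  is_path P && all (domain c) P.

(* Cyclic order on positions 0..n-1 of the boundary: k lies strictly inside
   the open arc going forward from position a to position b. *)
Definition strictly_between (n a b k : nat) : bool :=
  let d := fun j => ((j + n - a) %% n)%N in
  (0 < d k < d b)%N.

(* Essential crossing of P1, P2 (endpoints on the boundary c): A2 and B2
   lie in the two different open arcs of the boundary between A1 and B1. *)
Definition essential_crossing (c : seq pt) (P1 P2 : seq pt) : bool :=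
  let n := size c in
  let a := index (startp P1) c in
  let b := index (endp P1) c in
  let a2 := index (startp P2) c in
  let b2 := index (endp P2) c in
  (a != b) &&
  ((strictly_between n a b a2 && strictly_between n b a b2) ||
   (strictly_between n b a a2 && strictly_between n a b b2)).

From mathcomp Require Import all_boot all_order all_algebra.
From mathcomp Require Import zify ring lra.
Import Order.TTheory GRing.Theory Num.Theory.

Set Implicit Arguments.
Unset Strict Implicit.
Unset Printing Implicit Defensive.

(* Walk once around the boundary, of length n, and attach the paths to this
   tour through boundary arcs.  Read the endpoints of the paths as positions
   on the boundary cycle and pair them up so that the forward boundary arcs
   from each endpoint to its partner have total length at most n/2: after
   sorting, the two matchings of cyclically consecutive positions together
   use every forward gap once, so together they cost n.  Following the paths
   through the arcs of such a matching strings them into closed walks based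
   at boundary points, and each of them is spliced into the boundary tour
   where it starts.  The result has length at most n + n/2 + sum |P|. *)

(** * Walks *)

Lemma adjC : symmetric adj.
Proof. by move=> p q; rewrite /adj -[(p.1 - q.1)%R]opprB -[(p.2 - q.2)%R]opprB !abszN. Qed.

Lemma steps_cons a b s : steps [:: a, b & s] = (a, b) :: steps (b :: s).
Proof. by []. Qed.

Lemma steps_cat a A B :
  steps (a :: A ++ B) = steps (a :: A) ++ steps (last a A :: B).
Proof. by elim: A a => [|b A IH] a /=; [case: B | rewrite steps_cons IH]. Qed.

Lemma steps_rcons a A x : steps (rcons (a :: A) x) = rcons (steps (a :: A)) (last a A, x).
Proof. by rewrite -cats1 steps_cat cats1. Qed.

Lemma mem_steps_rev P u v : ((u, v) \in steps (rev P)) = ((v, u) \in steps P).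
Proof.
elim: P => [//|a [|b P] IH]; first by [].
rewrite rev_cons steps_cons in_cons -IH.
have: last b (rev (b :: P)) = b by rewrite rev_cons last_rcons.
case E: (rev (b :: P)) => [|r0 r] /= last_r.
  by move/(congr1 size): E; rewrite size_rev.
by rewrite steps_rcons mem_rcons in_cons last_r xpair_eqE andbC.
Qed.

Lemma steps_adj P u v : is_path P -> (u, v) \in steps P -> adj u v.
Proof.
case: P => [//|a P] /=; elim: P a => [//|b P IH] a /= /andP[ab bP].
by rewrite steps_cons in_cons => /orP[/eqP[-> ->] //|]; apply: IH.
Qed.

Lemma mem_steps_nth x0 P j :
  j.+1 < size P -> (nth x0 P j, nth x0 P j.+1) \in steps P.
Proof.
elim: P j => [|a [|b P] IH] [|j] //= lt_j; rewrite steps_cons in_cons ?eqxx //.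
by rewrite IH ?orbT.
Qed.

Lemma path_edge_rev P u v : path_edge (rev P) u v = path_edge P u v.
Proof. by rewrite /path_edge !mem_steps_rev orbC. Qed.

Lemma is_path_rev P : is_path P -> is_path (rev P).
Proof.
case: P => [//|a P] /= aP; rewrite (lastI a P) rev_rcons /= rev_path.
by rewrite (@eq_path _ _ adj) // => x y; exact: adjC.
Qed.

Lemma startp_rev P : startp (rev P) = endp P.
Proof. by case: P => [//|a P]; rewrite /startp /endp [in LHS](lastI a P) rev_rcons. Qed.

Lemma endp_rev P : endp (rev P) = startp P.
Proof. by case: P => [//|a P]; rewrite /startp /endp rev_cons last_rcons. Qed.

Lemma len_rev P : len (rev P) = len P.
Proof. by rewrite /len size_rev. Qed.

Definition sub_walk (P Q : seq pt) :=
  {subset P <= Q} /\ forall u v, path_edge P u v -> path_edge Q u v.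

Lemma sub_walk_refl P : sub_walk P P.
Proof. by split. Qed.

Lemma sub_walk_trans P Q R : sub_walk P Q -> sub_walk Q R -> sub_walk P R.
Proof. by move=> [PQ ePQ] [QR eQR]; split=> [x /PQ/QR|u v /ePQ/eQR]. Qed.

Lemma sub_walk_rev P : sub_walk P (rev P).
Proof. by split=> [x|u v]; rewrite ?mem_rev ?path_edge_rev. Qed.

Definition glue (A B : seq pt) : seq pt := A ++ behead B.

Section Glue.
Variables A B : seq pt.
Hypotheses (A_nil : A != [::]) (AB : endp A = startp B).

Lemma mem_glue x : (x \in glue A B) = (x \in A) || (x \in B).
Proof.
case: A B A_nil AB => [|a A'] [|b B'] //= _; rewrite /glue ?cats0 ?orbF //.
rewrite /endp /startp /= => <-; rewrite -cat_cons mem_cat [x \in _ :: B']in_cons.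
by case: eqP => [->|]; rewrite ?mem_last.
Qed.

Lemma path_edge_glue u v :
  path_edge (glue A B) u v = path_edge A u v || path_edge B u v.
Proof.
case: A B A_nil AB => [|a A'] [|b B'] //= _; rewrite /glue ?cats0.
  by rewrite /path_edge /steps /= !orbF.
by rewrite /endp /startp /= => <-; rewrite /path_edge -cat_cons steps_cat !mem_cat orbACA.
Qed.

Lemma startp_glue : startp (glue A B) = startp A.
Proof. by case: A A_nil. Qed.

Lemma endp_glue : endp (glue A B) = endp B.
Proof.
case: A B A_nil AB => [|a A'] [|b B'] //=; rewrite /glue /endp /startp ?cats0 //=.
by rewrite last_cat => _ ->.
Qed.

Lemma is_path_glue : B != [::] -> is_path (glue A B) = is_path A && is_path B.
Proof.
case: A B A_nil AB => [|a A'] [|b B'] //= _; rewrite /glue /endp /startp /=.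
by rewrite cat_path => -> _.
Qed.

Lemma len_glue : B != [::] -> len (glue A B) = len A + len B.
Proof. by case: A B A_nil => [|a A'] [|b B'] //=; rewrite /len size_cat. Qed.

Lemma sub_walk_gluel : sub_walk A (glue A B).
Proof. by split=> [x|u v]; rewrite ?mem_glue ?path_edge_glue // => ->. Qed.

Lemma sub_walk_gluer : sub_walk B (glue A B).
Proof. by split=> [x|u v]; rewrite ?mem_glue ?path_edge_glue // => ->; rewrite orbT. Qed.

Lemma sub_walk_glue Q : sub_walk A Q -> sub_walk B Q -> sub_walk (glue A B) Q.
Proof.
move=> [AQ eAQ] [BQ eBQ]; split=> [x|u v].
  by rewrite mem_glue // => /orP[/AQ|/BQ].
by rewrite path_edge_glue // => /orP[/eAQ|/eBQ].
Qed.

End Glue.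

Lemma glue_split (Q1 Q2 : seq pt) x : Q1 ++ x :: Q2 = glue (rcons Q1 x) (x :: Q2).
Proof. by rewrite /glue cat_rcons. Qed.

(** * Cheap pairings of positions on a cycle *)

Definition fwd_dist (n i j : nat) : nat := (j + n - i) %% n.

Lemma fwd_dist_le n i j : fwd_dist n i j <= j + n - i.
Proof. exact: leq_mod. Qed.

Lemma fwd_dist_sub n i j : i <= j < n -> fwd_dist n i j = j - i.
Proof. by move=> /andP[ij jn]; rewrite /fwd_dist addnC -addnBA // modnDl modn_small //; lia. Qed.

Lemma fwd_distK n i j : i < n -> j < n -> (i + fwd_dist n i j) %% n = j.
Proof.
move=> i_n j_n; rewrite modnDmr addnC subnK; last by lia.
by rewrite modnDr modn_small.
Qed.

Fixpoint pairup (s : seq nat) : seq (nat * nat) :=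
  if s is a :: b :: t then (a, b) :: pairup t else [::].

Definition unpair (M : seq (nat * nat)) : seq nat :=
  flatten [seq [:: p.1; p.2] | p <- M].

Definition pairing_cost n (M : seq (nat * nat)) : nat :=
  \sum_(p <- M) fwd_dist n p.1 p.2.

Lemma unpair_pairup s : ~~ odd (size s) -> unpair (pairup s) = s.
Proof.
have [k] := ubnP (size s); elim: k s => // k IH [|a [|b t]] //= size_t odd_t.
by rewrite /unpair /= -/(unpair _) IH //; [lia | rewrite negbK in odd_t].
Qed.

Lemma path_leq_last x l : path leq x l -> x <= last x l.
Proof. by elim: l x => //= y l IH x /andP[xy /IH]; apply: leq_trans. Qed.

Lemma pairing_cost_cons n p M :
  pairing_cost n (p :: M) = fwd_dist n p.1 p.2 + pairing_cost n M.
Proof. exact: big_cons. Qed.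

(* The two ways of pairing up consecutive entries of a sorted cyclic sequence
   together use every forward gap exactly once. *)
Lemma pairing_cost_pairup_shift n x y l :
  path leq y l -> all (fun i => i < n) (y :: l) -> odd (size l) ->
  pairing_cost n (pairup (y :: l)) + pairing_cost n (pairup (rcons l x)) =
  last y l - y + fwd_dist n (last y l) x.
Proof.
have [k] := ubnP (size l); elim: k y l => // k IH y [|a [|b t]] // size_t.
  move=> /andP[ya _] /and3P[y_n a_n _] _.
  by rewrite !pairing_cost_cons /pairing_cost !big_nil /= fwd_dist_sub ?ya // !addn0.
move=> /and3P[ya ab bt] /and4P[y_n a_n b_n t_n] /negPn odd_t.
have b_last := path_leq_last bt.
have size_lt : size t < k by move: size_t => /=; lia.
have bt_n : all (fun i => i < n) (b :: t) by apply/andP.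
have := IH b t size_lt bt bt_n odd_t.
rewrite -[pairup [:: y, a, b & t]]/((y, a) :: pairup (b :: t)).
rewrite -[pairup (rcons [:: a, b & t] x)]/((a, b) :: pairup (rcons t x)).
rewrite !pairing_cost_cons /= (@fwd_dist_sub n y a) ?ya // (@fwd_dist_sub n a b) ?ab //; lia.
Qed.

Lemma exists_short_pairing n s : all (fun i => i < n) s -> ~~ odd (size s) ->
  exists2 M, perm_eq (unpair M) s & 2 * pairing_cost n M <= n.
Proof.
rewrite -(perm_all _ (permEl (perm_sort leq s))) -(size_sort leq).
have := sort_sorted leq_total s; have := permEl (perm_sort leq s).
case: (sort leq s) => [|x l] perm_s sorted_s s_n even_s.
  by exists [::]; rewrite // /pairing_cost big_nil.
move/negPn: even_s => odd_l.
have := pairing_cost_pairup_shift x sorted_s s_n odd_l.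
have x_last := path_leq_last sorted_s.
have /(allP s_n) last_n : last x l \in x :: l by apply: mem_last.
have := fwd_dist_le n (last x l) x.
case: (leqP (pairing_cost n (pairup (x :: l))) (pairing_cost n (pairup (rcons l x)))) => cost_le.
  exists (pairup (x :: l)); last by lia.
  by rewrite unpair_pairup //= negbK.
exists (pairup (rcons l x)); last by lia.
by rewrite unpair_pairup ?size_rcons ?negbK // perm_rcons.
Qed.

(** * Walks along the boundary and tours *)

Section Boundary.
Variable c : seq pt.
Hypothesis c_simple : simple_closed_curve c.
Local Notation n := (size c).

Definition closed_boundary : seq pt := rcons c (startp c).

Lemma curve_edgesE : curve_edges c = steps closed_boundary.
Proof.
rewrite /closed_boundary /curve_edges /steps; case: c => [//|x s].
rewrite rot1_cons /startp /= -cats1 -cat_cons -[s ++ [:: x]]cats0.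
by rewrite zip_cat ?cats0 // size_cat addn1.
Qed.

Lemma curve_edge_closed_boundary u v : curve_edge c u v = path_edge closed_boundary u v.
Proof. by rewrite /curve_edge /path_edge curve_edgesE. Qed.

Lemma size_curve_gt0 : 0 < n.
Proof. by case/and3P: c_simple => /ltnW /ltnW. Qed.

Lemma is_path_closed_boundary : is_path closed_boundary.
Proof. by case/and3P: c_simple; rewrite /closed_boundary; case: c. Qed.

Lemma curve_edge_adj u v : curve_edge c u v -> adj u v.
Proof.
rewrite curve_edge_closed_boundary => /orP[|] /(steps_adj is_path_closed_boundary) //.
by rewrite adjC.
Qed.

Definition bvertex (i : nat) : pt := nth (0%R, 0%R) c (i %% n).

Lemma bvertex_mem i : bvertex i \in c.
Proof. by rewrite mem_nth // ltn_mod size_curve_gt0. Qed.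

Lemma bvertex_index x : x \in c -> bvertex (index x c) = x.
Proof. by move=> xc; rewrite /bvertex modn_small ?index_mem ?nth_index. Qed.

Lemma bvertex_edge i : curve_edge c (bvertex i) (bvertex i.+1).
Proof.
rewrite curve_edge_closed_boundary /bvertex /path_edge.
have -> : i.+1 %% n = (i %% n).+1 %% n by rewrite -addn1 -modnDml addn1.
have : i %% n < n by rewrite ltn_mod size_curve_gt0.
move: (i %% n) => j j_n; apply/orP; left.
have -> : nth (0%R, 0%R) c j = nth (0%R, 0%R) closed_boundary j by rewrite nth_rcons j_n.
have -> : nth (0%R, 0%R) c (j.+1 %% n) = nth (0%R, 0%R) closed_boundary j.+1.
  rewrite nth_rcons; have [j1_n|j1_n|->] := ltngtP j.+1 n.
  - by rewrite modn_small.
  - by rewrite ltnS leqNgt j_n in j1_n.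
  - by rewrite modnn; case: c.
by apply: mem_steps_nth; rewrite size_rcons.
Qed.

Fixpoint boundary_arc (i d : nat) : seq pt :=
  if d is d'.+1 then bvertex i :: boundary_arc i.+1 d' else [:: bvertex i].

Lemma boundary_arcE i d : boundary_arc i d = bvertex i :: behead (boundary_arc i d).
Proof. by case: d. Qed.

Lemma boundary_arc_nil i d : boundary_arc i d != [::].
Proof. by rewrite boundary_arcE. Qed.

Lemma startp_boundary_arc i d : startp (boundary_arc i d) = bvertex i.
Proof. by rewrite boundary_arcE. Qed.

Lemma endp_boundary_arc i d : endp (boundary_arc i d) = bvertex (i + d).
Proof.
elim: d i => [|d IH] i; first by rewrite addn0.
by have := IH i.+1; rewrite /endp /= [boundary_arc i.+1 d]boundary_arcE /= addSnnS.
Qed.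

Lemma len_boundary_arc i d : len (boundary_arc i d) = d.
Proof.
suff size_arc : size (boundary_arc i d) = d.+1 by rewrite /len size_arc.
by elim: d i => // d IH i /=; rewrite IH.
Qed.

Lemma boundary_arc_sub i d : {subset boundary_arc i d <= c}.
Proof.
elim: d i => [|d IH] i x /=; rewrite in_cons ?in_nil ?orbF.
  by move/eqP->; apply: bvertex_mem.
by case/orP=> [/eqP->|/IH]; first apply: bvertex_mem.
Qed.

Lemma steps_boundary_arc i d u v :
  (u, v) \in steps (boundary_arc i d) -> curve_edge c u v.
Proof.
elim: d i => [//|d IH] i.
rewrite /= [boundary_arc _ _]boundary_arcE steps_cons -boundary_arcE in_cons.
by case/orP=> [/eqP[-> ->]|/IH]; first apply: bvertex_edge.
Qed.

Lemma path_edge_boundary_arc i d u v :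
  path_edge (boundary_arc i d) u v -> curve_edge c u v.
Proof. by case/orP=> /steps_boundary_arc //; rewrite /curve_edge orbC. Qed.

Lemma is_path_boundary_arc i d : is_path (boundary_arc i d).
Proof.
elim: d i => [//|d IH] i.
have := IH i.+1; rewrite /= [boundary_arc i.+1 d]boundary_arcE /=.
by rewrite (curve_edge_adj (bvertex_edge i)).
Qed.

Definition chord (P : seq pt) : bool := [&& is_path P, startp P \in c & endp P \in c].

Definition ends (P : seq pt) : seq nat := [:: index (startp P) c; index (endp P) c].

Definition endpoints (L : seq (seq pt)) : seq nat := flatten (map ends L).

Definition sumlen (L : seq (seq pt)) : nat := \sum_(P <- L) len P.

Lemma chord_nil P : chord P -> P != [::].
Proof. by case: P. Qed.

Lemma endpoints_lt L : all chord L -> all (fun i => i < n) (endpoints L).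
Proof.
move=> /allP chL; apply/allP => i /flatten_mapP[P /chL /and3P[_ Pc0 Pc1]].
by rewrite !inE => /orP[] /eqP->; rewrite index_mem.
Qed.

Lemma endpoints_even L : ~~ odd (size (endpoints L)).
Proof. by elim: L => //= P L; rewrite negbK. Qed.

Lemma endpoints_rem L P P0 : P \in L -> perm_eq (ends P0) (ends P) ->
  perm_eq (endpoints L) (ends P0 ++ endpoints (rem P L)).
Proof.
move=> PL P0P; apply: perm_trans (perm_flatten (perm_map ends (perm_to_rem PL))) _.
by rewrite -[flatten _]/(ends P ++ endpoints (rem P L)) perm_cat2r perm_sym.
Qed.

Definition orientations (P : seq pt) : seq (seq pt) := [:: P; rev P].

Lemma rev_orientations P P0 : P0 \in orientations P -> rev P0 \in orientations P.
Proof. by rewrite !inE => /orP[]/eqP->; rewrite ?revK eqxx ?orbT. Qed.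

Lemma orientationsP P P0 : chord P -> P0 \in orientations P ->
  [/\ chord P0, len P0 = len P, sub_walk P P0, sub_walk P0 P &
      perm_eq (ends P0) (ends P)].
Proof.
move=> chP; rewrite !inE => /orP[] /eqP->.
  by split; rewrite ?perm_refl //; apply: sub_walk_refl.
move: chP => /and3P[Ppath Pc0 Pc1]; split.
- by rewrite /chord is_path_rev // startp_rev endp_rev Pc0 Pc1.
- exact: len_rev.
- exact: sub_walk_rev.
- by rewrite -{2}(revK P); apply: sub_walk_rev.
- by rewrite /ends startp_rev endp_rev; apply/permPl; apply: perm_catC [:: _] [:: _].
Qed.

Lemma orient_end P x : x \in ends P ->
  exists2 P0, P0 \in orientations P & index (endp P0) c = x.
Proof.
rewrite !inE => /orP[] /eqP->; last by exists P; rewrite ?mem_head.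
by exists (rev P); rewrite ?endp_rev // !inE eqxx orbT.
Qed.

Definition within (L : seq (seq pt)) (Q : seq pt) :=
  (forall x, x \in Q -> (exists2 P, P \in L & x \in P) \/ x \in c) /\
  (forall u v, path_edge Q u v ->
     (exists2 P, P \in L & path_edge P u v) \/ curve_edge c u v).

Lemma within_trans L L' Q :
  within L' Q -> (forall P', P' \in L' -> within L P') -> within L Q.
Proof.
move=> [QL' eQL'] L'L; split=> [x /QL'|u v /eQL'] [[P' P'L' xP']|]; auto.
- exact: (L'L P' P'L').1.
- exact: (L'L P' P'L').2.
Qed.

Lemma within_sub_walk L P Q : sub_walk Q P -> P \in L -> within L Q.
Proof. by move=> [QP eQP] PL; split=> [x /QP|u v /eQP]; left; exists P. Qed.

Lemma within_glue L A B : A != [::] -> endp A = startp B ->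
  within L A -> within L B -> within L (glue A B).
Proof.
move=> A_nil AB [vA eA] [vB eB]; split=> [x|u v].
  by rewrite mem_glue // => /orP[/vA|/vB].
by rewrite path_edge_glue // => /orP[/eA|/eB].
Qed.

Lemma within_boundary_arc L i d : within L (boundary_arc i d).
Proof. by split=> [x /boundary_arc_sub|u v /path_edge_boundary_arc]; right. Qed.

Definition bridge (P : seq pt) (y : nat) : seq pt :=
  let x := index (endp P) c in glue P (boundary_arc x (fwd_dist n x y)).

Section Bridge.
Variables (P : seq pt) (y : nat).
Hypotheses (chP : chord P) (y_n : y < n).
Local Notation x := (index (endp P) c).

Let P_nil : P != [::]. Proof. exact: chord_nil. Qed.

Let P_to_arc : endp P = startp (boundary_arc x (fwd_dist n x y)).
Proof. by case/and3P: chP => _ _ Pc; rewrite startp_boundary_arc bvertex_index. Qed.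

Lemma is_path_bridge : is_path (bridge P y).
Proof.
by case/andP: chP => P_path _; rewrite is_path_glue ?boundary_arc_nil ?P_path ?is_path_boundary_arc.
Qed.

Lemma startp_bridge : startp (bridge P y) = startp P.
Proof. exact: startp_glue. Qed.

Lemma endp_bridge : endp (bridge P y) = bvertex y.
Proof.
rewrite endp_glue // endp_boundary_arc /bvertex fwd_distK ?modn_small // index_mem.
by case/and3P: chP.
Qed.

Lemma len_bridge : len (bridge P y) = len P + fwd_dist n x y.
Proof. by rewrite len_glue ?boundary_arc_nil ?len_boundary_arc. Qed.

Lemma sub_walk_bridge : sub_walk P (bridge P y).
Proof. exact: sub_walk_gluel. Qed.

Lemma within_bridge L : within L P -> within L (bridge P y).
Proof. by move=> PL; apply: within_glue => //; apply: within_boundary_arc. Qed.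

End Bridge.

Definition link (P0 P1 : seq pt) : seq pt := glue (bridge P0 (index (startp P1) c)) P1.

Section Link.
Variables P0 P1 : seq pt.
Hypotheses (chP0 : chord P0) (chP1 : chord P1).
Local Notation y := (index (startp P1) c).

Let y_n : y < n. Proof. by case/and3P: chP1 => _ P1c _; rewrite index_mem. Qed.

Let bridge_P1 : endp (bridge P0 y) = startp P1.
Proof. by case/and3P: chP1 => _ P1c _; rewrite endp_bridge ?bvertex_index. Qed.

Let bridge_nil : bridge P0 y != [::].
Proof. by have := is_path_bridge y chP0; case: (bridge P0 y). Qed.

Lemma chord_link : chord (link P0 P1).
Proof.
case/and3P: chP0 => _ P0c _; case/and3P: chP1 => P1path _ P1c.
rewrite /chord is_path_glue ?(chord_nil chP1) ?is_path_bridge ?P1path //.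
by rewrite startp_glue // endp_glue // startp_bridge // P0c P1c.
Qed.

Lemma ends_link : ends (link P0 P1) = [:: index (startp P0) c; index (endp P1) c].
Proof. by rewrite /ends startp_glue // endp_glue // startp_bridge. Qed.

Lemma len_link :
  len (link P0 P1) = len P0 + fwd_dist n (index (endp P0) c) y + len P1.
Proof. by rewrite len_glue ?len_bridge ?(chord_nil chP1). Qed.

Lemma within_link L : within L P0 -> within L P1 -> within L (link P0 P1).
Proof. by move=> L0 L1; apply: within_glue => //; apply: within_bridge. Qed.

Lemma sub_walk_linkl : sub_walk P0 (link P0 P1).
Proof. exact: sub_walk_trans (sub_walk_bridge _ _) (sub_walk_gluel _ _). Qed.

Lemma sub_walk_linkr : sub_walk P1 (link P0 P1).
Proof. exact: sub_walk_gluer. Qed.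

End Link.

(* Q contains the whole boundary, so that a closed walk based at any boundary
   point can still be spliced into it. *)
Definition tour (L : seq (seq pt)) (Q : seq pt) :=
  [/\ is_path Q, {subset c <= Q}, forall P, P \in L -> sub_walk P Q & within L Q].

Lemma len_closed_boundary : len closed_boundary = n.
Proof. by rewrite /len size_rcons. Qed.

Lemma tour_closed_boundary : tour [::] closed_boundary.
Proof.
have cW : {subset closed_boundary <= c}.
  move=> x; rewrite mem_rcons in_cons => /orP[/eqP->|//].
  by have := size_curve_gt0; case: (c) => // y s _; apply: mem_head.
split=> //; first exact: is_path_closed_boundary.
  by move=> x xc; rewrite mem_rcons in_cons xc orbT.
by split=> [x /cW|u v]; rewrite -?curve_edge_closed_boundary; right.
Qed.

Lemma tour_refine L L' Q : tour L' Q ->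
  (forall P, P \in L -> exists2 P', P' \in L' & sub_walk P P') ->
  (forall P', P' \in L' -> within L P') -> tour L Q.
Proof.
move=> [Qpath cQ L'Q wQ] LL' L'L; split=> //; last exact: within_trans wQ L'L.
by move=> P /LL' [P' /L'Q P'Q PP']; apply: sub_walk_trans PP' P'Q.
Qed.

Lemma tour_splice R Q' Z : tour R Q' -> is_path Z -> startp Z \in c ->
  endp Z = startp Z -> exists2 Q, tour (Z :: R) Q & len Q = len Q' + len Z.
Proof.
move=> [Q'path cQ' RQ' wQ'] Zpath Zc Zclosed.
have Z_nil : Z != [::] by case: (Z) Zpath.
have Z_Q' := cQ' _ Zc; move: Q'path cQ' RQ' wQ'.
case/splitPr: Z_Q' => Q1 Q2; rewrite glue_split.
set A := rcons Q1 _; set B := _ :: Q2 => Q'path cQ' RQ' wQ'.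
have A_nil : A != [::] by rewrite /A; case: (Q1).
have AZ : endp A = startp Z by rewrite /endp last_rcons.
have AB : endp A = startp B by [].
have AZ_nil : glue A Z != [::] by case: (A) A_nil.
have AZB : endp (glue A Z) = startp B by rewrite endp_glue.
have AZ_Q : sub_walk (glue A Z) (glue (glue A Z) B) by apply: sub_walk_gluel.
have B_Q : sub_walk B (glue (glue A Z) B) by apply: sub_walk_gluer.
have AB_Q : sub_walk (glue A B) (glue (glue A Z) B).
  by apply: sub_walk_glue => //; apply: sub_walk_trans AZ_Q; apply: sub_walk_gluel.
exists (glue (glue A Z) B); last by rewrite !len_glue // addnAC.
have [Apath Bpath] : is_path A /\ is_path B by apply/andP; rewrite -is_path_glue.
split.
- by rewrite !is_path_glue ?Apath ?Zpath.
- by move=> x /cQ'; apply: AB_Q.1.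
- move=> P; rewrite in_cons => /orP[/eqP->|/RQ' PQ']; last exact: sub_walk_trans AB_Q.
  by apply: sub_walk_trans AZ_Q; apply: sub_walk_gluer.
- apply: (@within_trans _ [:: glue A B; Z]).
    apply: within_glue => //; first apply: within_glue => //.
    - exact: within_sub_walk (sub_walk_gluel _ _) (mem_head _ _).
    - by apply: (within_sub_walk (sub_walk_refl Z)); rewrite !inE eqxx orbT.
    - exact: within_sub_walk (sub_walk_gluer _ _) (mem_head _ _).
  move=> P; rewrite !inE => /orP[] /eqP->; last first.
    exact: within_sub_walk (sub_walk_refl Z) (mem_head _ _).
  apply: (within_trans wQ') => P' P'R.
  by apply: (within_sub_walk (sub_walk_refl P')); rewrite inE P'R orbT.
Qed.

Lemma tour_perm L L' Q : perm_eq L L' -> tour L Q -> tour L' Q.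
Proof.
move=> LL' tQ; apply: tour_refine tQ _ _ => P PL'.
  by exists P; [rewrite (perm_mem LL') | apply: sub_walk_refl].
by apply: (within_sub_walk (sub_walk_refl P)); rewrite -(perm_mem LL').
Qed.

Lemma tour_loop R Q' P P0 : chord P -> P0 \in orientations P -> tour R Q' ->
  exists2 Q, tour (P :: R) Q &
    len Q = len Q' + len P + fwd_dist n (index (endp P0) c) (index (startp P0) c).
Proof.
move=> chP P0P tQ'; have [chP0 lenP0 PP0 P0P' _] := orientationsP chP P0P.
have [_ P0c _] := and3P chP0.
set Z := bridge P0 (index (startp P0) c).
have Zc : startp Z \in c by rewrite startp_bridge.
have Zclosed : endp Z = startp Z.
  by rewrite endp_bridge ?index_mem // bvertex_index // startp_bridge.
have [Q tQ lenQ] := tour_splice tQ' (is_path_bridge _ chP0) Zc Zclosed.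
exists Q; last by rewrite lenQ len_bridge // lenP0 addnA.
apply: tour_refine tQ _ _ => X; rewrite inE => /orP[/eqP->|XR].
- by exists Z; rewrite ?mem_head //; apply: sub_walk_trans PP0 (sub_walk_bridge _ _).
- by exists X; rewrite ?inE ?XR ?orbT //; apply: sub_walk_refl.
- by apply: within_bridge => //; apply: within_sub_walk P0P' (mem_head _ _).
- by apply: (within_sub_walk (sub_walk_refl X)); rewrite inE XR orbT.
Qed.

Lemma tour_link R Q P P' P0 P1 : chord P -> chord P' ->
  P0 \in orientations P -> P1 \in orientations P' ->
  tour (link P0 P1 :: R) Q -> tour [:: P, P' & R] Q.
Proof.
move=> chP chP' P0P P1P' tQ.
have [chP0 _ PP0 P0P'' _] := orientationsP chP P0P.
have [chP1 _ P'P1 P1P'' _] := orientationsP chP' P1P'.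
apply: tour_refine tQ _ _ => X.
  rewrite !inE => /or3P[/eqP->|/eqP->|XR].
  - by exists (link P0 P1); rewrite ?mem_head //; apply: sub_walk_trans PP0 (sub_walk_linkl _ _).
  - by exists (link P0 P1); rewrite ?mem_head //; apply: sub_walk_trans P'P1 (sub_walk_linkr _ _).
  - by exists X; rewrite ?inE ?XR ?orbT //; apply: sub_walk_refl.
rewrite inE => /orP[/eqP->|XR].
  by apply: within_link => //; [apply: (within_sub_walk P0P'') | apply: (within_sub_walk P1P'')];
    rewrite !inE eqxx ?orbT.
by apply: (within_sub_walk (sub_walk_refl X)); rewrite !inE XR !orbT.
Qed.

Definition tour_bound (M : seq (nat * nat)) :=
  forall L, all chord L -> perm_eq (unpair M) (endpoints L) ->
  exists2 Q, tour L Q & len Q <= n + sumlen L + pairing_cost n M.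

Lemma sumlen_cons P L : sumlen (P :: L) = len P + sumlen L.
Proof. exact: big_cons. Qed.

Lemma sumlen_rem L P : P \in L -> sumlen L = len P + sumlen (rem P L).
Proof. by move=> PL; rewrite -sumlen_cons /sumlen (perm_big _ (perm_to_rem PL)). Qed.

Lemma pick_end L x : x \in endpoints L ->
  exists2 P, P \in L & exists2 P0, P0 \in orientations P & index (endp P0) c = x.
Proof. by case/flatten_mapP => P PL /orient_end; exists P. Qed.

Lemma tour_bound_nil : tour_bound [::].
Proof.
case=> [|P L] _ perm_L; last by have := perm_size perm_L.
exists closed_boundary; first exact: tour_closed_boundary.
by rewrite len_closed_boundary /sumlen /pairing_cost !big_nil !addn0.
Qed.

Section Step.
Variables (M : seq (nat * nat)) (L : seq (seq pt)) (P P0 : seq pt).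
Hypotheses (IH : tour_bound M) (chL : all chord L) (PL : P \in L).
Hypothesis P0P : P0 \in orientations P.
Local Notation R := (rem P L).
Local Notation x := (index (endp P0) c).
Local Notation w := (index (startp P0) c).

Let chP : chord P. Proof. exact: allP chL P PL. Qed.

Let chR : all chord R. Proof. by apply/allP => Q /mem_rem /(allP chL). Qed.

Lemma tour_bound_loop : perm_eq (unpair M) (endpoints R) ->
  exists2 Q, tour L Q & len Q <= n + sumlen L + (fwd_dist n x w + pairing_cost n M).
Proof.
move=> perm_R; have [Q' tQ' lenQ'] := IH chR perm_R.
have [Q tQ lenQ] := tour_loop chP P0P tQ'.
exists Q; first by apply: tour_perm tQ; rewrite perm_sym perm_to_rem.
by rewrite lenQ (sumlen_rem PL); lia.
Qed.

Lemma tour_bound_link y : y \in endpoints R ->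
  perm_eq (y :: unpair M) (w :: endpoints R) ->
  exists2 Q, tour L Q & len Q <= n + sumlen L + (fwd_dist n x y + pairing_cost n M).
Proof.
move=> /pick_end[P' P'R [P1' P1'P' P1'y]] perm_R.
set P1 := rev P1'; have P1P' : P1 \in orientations P' := rev_orientations P1'P'.
have P1y : index (startp P1) c = y by rewrite startp_rev.
have chP' : chord P' := allP chR P' P'R.
have [chP0 lenP0 _ _ _] := orientationsP chP P0P.
have [chP1 lenP1 _ _ endsP1] := orientationsP chP' P1P'.
set R' := rem P' R.
have chR' : all chord (link P0 P1 :: R').
  by rewrite /= chord_link //; apply/allP => Q /mem_rem /(allP chR).
have perm_R' : perm_eq (unpair M) (endpoints (link P0 P1 :: R')).
  rewrite -(perm_cons y); apply: perm_trans perm_R _.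
  apply: perm_trans (_ : perm_eq _ (w :: ends P1 ++ endpoints R')) _.
    by rewrite perm_cons endpoints_rem.
  rewrite -[endpoints (_ :: _)]/(ends (link P0 P1) ++ endpoints R') ends_link // {1}/ends P1y.
  exact: permEl (perm_catCA [:: w] [:: y] _).
have [Q tQ lenQ] := IH chR' perm_R'.
exists Q.
  apply: tour_perm (tour_link chP chP' P0P P1P' tQ).
  by rewrite perm_sym (perm_trans (perm_to_rem PL)) // perm_cons perm_to_rem.
apply: leq_trans lenQ _; rewrite sumlen_cons len_link // lenP0 lenP1 P1y.
by rewrite (sumlen_rem PL) (sumlen_rem P'R); apply: eq_leq; ring.
Qed.

End Step.

Lemma tour_bound_cons x y M : tour_bound M -> tour_bound ((x, y) :: M).
Proof.
move=> IH L chL perm_L.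
have /pick_end[P PL [P0 P0P P0x]] : x \in endpoints L by rewrite -(perm_mem perm_L) mem_head.
have [_ _ _ _ endsP0] := orientationsP (allP chL P PL) P0P.
have perm_R : perm_eq (y :: unpair M) (index (startp P0) c :: endpoints (rem P L)).
  rewrite -(perm_cons x); apply: perm_trans perm_L _.
  apply: perm_trans (endpoints_rem PL endsP0) _.
  by rewrite /ends P0x; apply: permEl (perm_catCA [:: _] [:: x] _).
rewrite pairing_cost_cons -P0x.
have [y_w|y_w] := eqVneq y (index (startp P0) c).
  by move: perm_R; rewrite y_w perm_cons; apply: (tour_bound_loop IH chL PL P0P).
apply: (tour_bound_link IH chL PL P0P _ perm_R).
by have := perm_mem perm_R y; rewrite !inE eqxx (negbTE y_w) /= => <-.
Qed.

Lemma tour_boundP M : tour_bound M.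
Proof. by elim: M => [|[x y] M IH]; [exact: tour_bound_nil | exact: tour_bound_cons]. Qed.

End Boundary.

Local Open Scope ring_scope.

Theorem lemma2p6 (c : seq pt) (S : seq (seq pt)) :
  simple_closed_curve c ->
  (forall P, P \in S -> path_in c P) ->
  (forall P, P \in S -> (startp P \in c) && (endp P \in c)) ->
  (forall i j : nat, (i < size S)%N -> (j < size S)%N -> i <> j ->
     ~~ essential_crossing c (nth [::] S i) (nth [::] S j)) ->
  exists Q : seq pt,
    [/\ is_path Q,
        ((len Q)%:R : rat) <= 3%:R / 2%:R * (curve_len c)%:R
                              + (\sum_(P <- S) len P)%:R &
      [/\
        (forall P x, P \in S -> x \in P -> x \in Q),
        (forall P u v, P \in S -> path_edge P u v -> path_edge Q u v),
        (forall x, x \in Q -> (exists2 P, P \in S & x \in P) \/ x \in c) &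
        (forall u v, path_edge Q u v ->
           (exists2 P, P \in S & path_edge P u v) \/ curve_edge c u v)]].
Proof.
move=> c_simple S_in S_ends _.
have chS : all (chord c) S.
  by apply/allP => P PS; case/andP: (S_in P PS) => P_path _; rewrite /chord P_path S_ends.
have [M perm_M cost_M] := exists_short_pairing (endpoints_lt chS) (endpoints_even c S).
have [Q [Q_path _ SQ [vQ eQ]] len_Q] := tour_boundP c_simple chS perm_M.
exists Q; split=> //; last first.
  by split=> //; [move=> P x /SQ[PQ _] /PQ | move=> P u v /SQ[_ ePQ] /ePQ].
have -> : \sum_(P <- S) len P = sumlen S by [].
have le_len : ((len Q)%:R : rat) <= (size c + sumlen S + pairing_cost (size c) M)%:R.
  by rewrite ler_nat.
have le_cost : ((2 * pairing_cost (size c) M)%:R : rat) <= (size c)%:R by rewrite ler_nat.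
rewrite !natrD in le_len; rewrite natrM in le_cost; rewrite /curve_len; lra.
Qed.
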